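(* Let $\beta_2,\beta_3,\delta_1,\delta_2,\delta_3,\mu_1,\mu_2,\eta,K_1,K_2,K_3$ be positive real numbers and consider the system \[ \begin{aligned} \dot{H} &= - \delta_1 H - \eta SH + \mu_1C\left(1-\frac{H}{K_1}\right), \\ \dot{S} &= \beta_2 S \left(1-\frac{S}{K_2}\right) - \delta_2 S - \eta S H + \mu_2 C \left(1-\frac{S}{K_2}\right), \\ \dot{C} &= \beta_3 C \left(1-\frac{C}{K_3}\right) - \delta_3 C + \eta S H . \end{aligned} \] Let $D=[0, K_1] \times [0, K_2] \times [0, \tilde{K}_3]$ with \[ \tilde{K}_3 := \frac{1}{2} \left( \frac{\beta_3 - \delta_3}{\beta_3} K_3 + \sqrt{\left(\frac{\beta_3-\delta_3}{\beta_3}\right)^2 K_3^2 + 8\frac{\eta}{\beta_3} K_1 K_2K_3} \right). \] Then: (a) Every fixed point of the system lying in $\mathbb{R}_{\ge 0}^3$ with at least one vanishing component is either $(0,0,0)$ or $\left(0, \frac{\beta_2-\delta_2}{\beta_2} K_2, 0 \right)$. (b) Every fixed point $(H^\star, S^\star, C^\star)$ in the interior of $D$ satisfies \[ \frac{\beta_3 - \delta_3}{\beta_3} K_3 < C^\star < \frac{\beta_3 - \delta_3 + \mu_1}{\beta_3} K_3 . \] (c) In each of the following cases there exists at least one fixed point in the interior of $D$: (i) $\beta_3 > \delta_3$; (ii) $\beta_3 = \delta_3$ and $\beta_2-\delta_2 > -\frac{\eta \mu_1 \mu_2 K_3}{\beta_3 \delta_1}$; (iii) $-\mu_1 < \beta_3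 - \delta_3 < 0$ and $\beta_2 - \delta_2 > -\frac{\beta_2\delta_1(\beta_3-\delta_3)}{\eta K_2 (\beta_3-\delta_3+\mu_1)}$.
   Context: The system is a population model (mycobiont host $H$, photobiont symbiont $S$, lichen complex $C$) in which all parameters are birth, death, formation rates and carrying capacities. A fixed point is a point of $\mathbb{R}^3$ at which the right-hand side of the system vanishes. *)

From Stdlib Require Import Reals.
Open Scope R_scope.

Definition dH (d1 eta mu1 K1 : R) (H S C : R) : R :=
  - d1 * H - eta * S * H + mu1 * C * (1 - H / K1).

Definition dS (b2 d2 eta mu2 K2 : R) (H S C : R) : R :=
  b2 * S * (1 - S / K2) - d2 * S - eta * S * H + mu2 * C * (1 - S / K2).

Definition dC (b3 d3 eta K3 : R) (H S C : R) : R :=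
  b3 * C * (1 - C / K3) - d3 * C + eta * S * H.

Definition is_fixed_point (b2 b3 d1 d2 d3 mu1 mu2 eta K1 K2 K3 : R)
  (H S C : R) : Prop :=
  dH d1 eta mu1 K1 H S C = 0 /\
  dS b2 d2 eta mu2 K2 H S C = 0 /\
  dC b3 d3 eta K3 H S C = 0.

Definition K3tilde (b3 d3 eta K1 K2 K3 : R) : R :=
  / 2 * ((b3 - d3) / b3 * K3 +
         sqrt (((b3 - d3) / b3) ^ 2 * K3 ^ 2 + 8 * (eta / b3) * K1 * K2 * K3)).

Definition in_interior_D (b3 d3 eta K1 K2 K3 : R) (H S C : R) : Prop :=
  0 < H < K1 /\ 0 < S < K2 /\ 0 < C < K3tilde b3 d3 eta K1 K2 K3.

From Stdlib Require Import Reals Lra Psatz Ranalysis5.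
From Coquelicot Require Import Coquelicot.
Open Scope R_scope.

(* At a fixed point with H, S, C > 0 the C-equation reads eta S H = C l(C), where
   l(C) = b3 C / K3 - (b3 - d3), and the H-equation gives eta S H < mu1 C, so
   0 < l(C) < mu1: this is (b), and the same identities keep H, S and C inside D.
   Conversely, for C >= 0 with l(C) < mu1 the H- and C-equations are solved
   explicitly for H = H(C) and S = S(C), so interior fixed points are the positive
   roots of the S-equation along this curve, a continuous function of C alone.  Under
   each hypothesis of (c) it is positive at the left end of the admissible range of C
   (after division by C when b3 = d3, where the curve starts at the origin), and it is
   negative once S(C) reaches K2, which happens before l(C) reaches mu1; the
   intermediate value theorem provides the root. *)

Lemma lt_larger_root (a c x : R) :
  0 < c -> x * x - a * x < c -> x < / 2 * (a + sqrt (a ^ 2 + 4 * c)).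
Proof.
  intros hc hx.
  set (q := sqrt (a ^ 2 + 4 * c)).
  assert (hq2 : q * q = a ^ 2 + 4 * c) by (apply sqrt_sqrt; nra).
  assert (hq0 : 0 <= q) by apply sqrt_pos.
  destruct (Rlt_or_le x (/ 2 * (a + q))) as [hlt | hge]; [exact hlt | exfalso].
  assert (0 <= (x - / 2 * (a + q)) * (x - / 2 * (a - q))) by (apply Rmult_le_pos; lra).
  nra.
Qed.

Lemma root_of_sign_change (f : R -> R) (x y : R) :
  x < y -> (forall a, x <= a <= y -> continuity_pt f a) -> 0 < f x -> f y < 0 ->
  exists z, x < z < y /\ f z = 0.
Proof.
  intros hxy hf hx hy.
  destruct (IVT_interv (fun a => - f a) x y) as [z [[hxz hzy] hz]]; try lra.
  { intros a ha. apply continuity_pt_opp, hf, ha. }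
  exists z. split; [split | lra].
  - destruct hxz as [hlt | <-]; [exact hlt | lra].
  - destruct hzy as [hlt | ->]; [exact hlt | lra].
Qed.

Lemma continuity_pt_of_ex_derive (f : R -> R) (x : R) :
  ex_derive f x -> continuity_pt f x.
Proof.
  intro hf. apply continuity_pt_filterlim.
  exact (ex_derive_continuous (V := R_NormedModule) f x hf).
Qed.

Section LichenFixedPoints.

Context {b2 b3 d1 d2 d3 mu1 mu2 eta K1 K2 K3 : R}.
Hypotheses (hb2 : 0 < b2) (hb3 : 0 < b3) (hd1 : 0 < d1) (hd2 : 0 < d2)
  (hmu1 : 0 < mu1) (hmu2 : 0 < mu2) (heta : 0 < eta)
  (hK1 : 0 < K1) (hK2 : 0 < K2) (hK3 : 0 < K3).

Local Notation fixed_point := (is_fixed_point b2 b3 d1 d2 d3 mu1 mu2 eta K1 K2 K3).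

Lemma dS_eq_balance (H S C : R) :
  dS b2 d2 eta mu2 K2 H S C = (1 - S / K2) * (b2 * S + mu2 * C) - S * (d2 + eta * H).
Proof. unfold dS. ring. Qed.

Lemma balance_neg (u v H S : R) :
  0 < u -> 0 <= v -> 0 <= H -> K2 <= S ->
  (1 - S / K2) * (b2 * u + mu2 * v) - u * (d2 + eta * H) < 0.
Proof.
  intros hu hv hH hS.
  assert (hSK : 1 <= S / K2) by (apply Rle_div_r; [exact hK2 | lra]).
  assert (0 < b2 * u + mu2 * v) by nra.
  assert (0 < u * (d2 + eta * H)) by (apply Rmult_lt_0_compat; nra).
  nra.
Qed.

Lemma dS_neg (H S C : R) :
  0 <= H -> 0 <= C -> K2 <= S -> dS b2 d2 eta mu2 K2 H S C < 0.
Proof.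
  intros hH hC hS. rewrite dS_eq_balance. apply balance_neg; lra.
Qed.

Lemma boundary_fixed_point (H S C : R) :
  fixed_point H S C -> H = 0 \/ S = 0 \/ C = 0 ->
  (H = 0 /\ S = 0 /\ C = 0) \/ (H = 0 /\ S = (b2 - d2) / b2 * K2 /\ C = 0).
Proof.
  intros [eH [eS eC]] hzero. unfold dH, dS, dC in *.
  assert (hC_of_H : H = 0 -> C = 0).
  { intros ->. rewrite Rdiv_0_l in eH. nra. }
  assert (hH_of_S : S = 0 -> H = 0).
  { intros ->. rewrite Rdiv_0_l in eS.
    assert (C = 0) by nra. subst C. nra. }
  assert (hH : H = 0).
  { destruct hzero as [hH | [hS | ->]]; auto.
    assert (e : eta * S * H = 0) by nra.
    destruct (Rmult_integral _ _ e) as [e' | ]; [| assumption].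
    destruct (Rmult_integral _ _ e') as [ | ]; [lra | auto]. }
  assert (hC : C = 0) by auto.
  subst H C.
  assert (e : S * (b2 - d2 - b2 * S / K2) = 0) by (rewrite <- eS; field; lra).
  destruct (Rmult_integral _ _ e) as [hS | hS]; [left; auto | right].
  split; [reflexivity |]. split; [| reflexivity].
  replace S with (b2 * S / K2 / b2 * K2) by (field; lra).
  replace (b2 * S / K2) with (b2 - d2) by lra.
  reflexivity.
Qed.

Definition loss_rate (C : R) : R := b3 * C / K3 - (b3 - d3).

Lemma dC_eq (H S C : R) : dC b3 d3 eta K3 H S C = eta * S * H - C * loss_rate C.
Proof. unfold dC, loss_rate. field. lra. Qed.

Lemma loss_rate_lt (x y : R) : x < y -> loss_rate x < loss_rate y.
Proof.
  intro hxy. unfold loss_rate.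
  assert (b3 * x / K3 < b3 * y / K3) by (apply Rmult_lt_compat_r; [apply Rinv_0_lt_compat |]; nra).
  lra.
Qed.

Lemma loss_rate_le (x y : R) : x <= y -> loss_rate x <= loss_rate y.
Proof.
  intros [hlt | ->]; [left; apply loss_rate_lt, hlt | right; reflexivity].
Qed.

Lemma positive_fixed_point_loss_rate (H S C : R) :
  fixed_point H S C -> 0 < H -> 0 < S -> 0 < C -> 0 < loss_rate C < mu1.
Proof.
  intros [eH [_ eC]] hH hS hC.
  rewrite dC_eq in eC. unfold dH in eH.
  assert (0 < eta * S * H) by (apply Rmult_lt_0_compat; nra).
  assert (0 < mu1 * C * (H / K1)) by (apply Rmult_lt_0_compat; [nra | apply Rdiv_lt_0_compat; lra]).
  split; nra.
Qed.

Lemma C_bounds_of_loss_rate (C : R) :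
  0 < loss_rate C < mu1 ->
  (b3 - d3) / b3 * K3 < C /\ C < (b3 - d3 + mu1) / b3 * K3.
Proof.
  intros [hl hlmu].
  assert (eC : C = (b3 - d3 + loss_rate C) / b3 * K3) by (unfold loss_rate; field; lra).
  rewrite eC.
  split; apply Rmult_lt_compat_r, Rmult_lt_compat_r; try apply Rinv_0_lt_compat; lra.
Qed.

Lemma positive_fixed_point_in_interior (H S C : R) :
  fixed_point H S C -> 0 < H -> 0 < S -> 0 < C -> in_interior_D b3 d3 eta K1 K2 K3 H S C.
Proof.
  intros fp hH hS hC.
  pose proof (positive_fixed_point_loss_rate H S C fp hH hS hC) as hl.
  destruct fp as [eH [eS eC]].
  assert (hHK : H < K1).
  { apply Rnot_le_lt. intro hge. unfold dH in eH.
    assert (1 <= H / K1) by (apply Rle_div_r; lra).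
    assert (0 < eta * S * H) by (apply Rmult_lt_0_compat; nra).
    assert (0 < mu1 * C) by nra.
    nra. }
  assert (hSK : S < K2).
  { apply Rnot_le_lt. intro hge. pose proof (dS_neg H S C). lra. }
  assert (hCK : C < K3tilde b3 d3 eta K1 K2 K3).
  { (* K3tilde is the larger root of b3 C^2 / K3 - (b3 - d3) C = 2 eta K1 K2,
       while here the left-hand side is eta S H < eta K1 K2. *)
    unfold K3tilde.
    replace (((b3 - d3) / b3) ^ 2 * K3 ^ 2 + 8 * (eta / b3) * K1 * K2 * K3)
      with (((b3 - d3) / b3 * K3) ^ 2 + 4 * (2 * eta * K1 * K2 * K3 / b3)) by (field; lra).
    apply lt_larger_root.
    { apply Rdiv_lt_0_compat; [repeat apply Rmult_lt_0_compat | ]; lra. }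
    rewrite dC_eq in eC.
    replace (C * C - (b3 - d3) / b3 * K3 * C) with (C * loss_rate C * K3 / b3)
      by (unfold loss_rate; field; lra).
    replace (C * loss_rate C) with (eta * S * H) by lra.
    apply Rmult_lt_compat_r; [apply Rinv_0_lt_compat; lra |].
    assert (S * H < K1 * K2) by nra.
    assert (0 < eta * K3) by nra.
    assert (0 < K1 * K2) by nra.
    nra. }
  unfold in_interior_D. lra.
Qed.

Definition H_of (C : R) : R := C * (mu1 - loss_rate C) / (d1 + mu1 * C / K1).

Definition S_of (C : R) : R :=
  loss_rate C * (d1 + mu1 * C / K1) / (eta * (mu1 - loss_rate C)).

Definition reduced_dS (C : R) : R := dS b2 d2 eta mu2 K2 (H_of C) (S_of C) C.

Lemma H_of_denom_pos (C : R) : 0 <= C -> 0 < d1 + mu1 * C / K1.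
Proof.
  intro hC. assert (0 <= mu1 * C / K1) by (apply Rdiv_le_0_compat; nra). lra.
Qed.

Lemma H_of_nonneg (C : R) : 0 <= C -> loss_rate C < mu1 -> 0 <= H_of C.
Proof.
  intros hC hl. apply Rdiv_le_0_compat; [nra | apply H_of_denom_pos, hC].
Qed.

Lemma fixed_point_of_reduced_root (C : R) :
  0 <= C -> loss_rate C < mu1 -> reduced_dS C = 0 -> fixed_point (H_of C) (S_of C) C.
Proof.
  intros hC hl hF. pose proof (H_of_denom_pos C hC).
  split; [| split; [exact hF |]].
  - unfold dH, H_of, S_of. field. repeat split; nra.
  - rewrite dC_eq. unfold H_of, S_of. field. repeat split; nra.
Qed.

Lemma interior_fixed_point_of_reduced_root (C : R) :
  0 < C -> 0 < loss_rate C < mu1 -> reduced_dS C = 0 ->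
  exists H S C, fixed_point H S C /\ in_interior_D b3 d3 eta K1 K2 K3 H S C.
Proof.
  intros hC [hl0 hl] hF.
  pose proof (H_of_denom_pos C (Rlt_le _ _ hC)).
  assert (fp := fixed_point_of_reduced_root C (Rlt_le _ _ hC) hl hF).
  exists (H_of C), (S_of C), C. split; [exact fp |].
  apply positive_fixed_point_in_interior; [exact fp | | | exact hC].
  - apply Rdiv_lt_0_compat; nra.
  - apply Rdiv_lt_0_compat; nra.
Qed.

Lemma S_of_unbounded (x : R) :
  0 <= x -> loss_rate x < mu1 -> exists y, x < y /\ loss_rate y < mu1 /\ K2 <= S_of y.
Proof.
  intros hx hlx.
  set (q := eta * K2 * mu1 / (d1 + eta * K2)).
  assert (hq : q * (d1 + eta * K2) = eta * K2 * mu1) by (unfold q; field; nra).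
  assert (0 < eta * K2) by nra.
  assert (hq0 : 0 < q) by (apply Rdiv_lt_0_compat; nra).
  assert (hqmu : q < mu1) by nra.
  assert (hmax : Rmax q (loss_rate x) < mu1) by (apply Rmax_lub_lt; assumption).
  pose proof (Rmax_l q (loss_rate x)). pose proof (Rmax_r q (loss_rate x)).
  set (t := (Rmax q (loss_rate x) + mu1) / 2).
  set (y := (t + (b3 - d3)) / b3 * K3).
  assert (hly : loss_rate y = t) by (unfold y, loss_rate; field; lra).
  assert (hxy : x < y).
  { apply Rnot_le_lt. intro hyx. pose proof (loss_rate_le y x hyx). unfold t in hly. lra. }
  exists y. split; [exact hxy |]. split; [unfold t in hly; lra |].
  unfold S_of. rewrite hly.
  assert (hqt : q <= t) by (unfold t; lra).
  assert (htmu : t < mu1) by (unfold t; lra).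
  assert (0 <= mu1 * y / K1) by (apply Rdiv_le_0_compat; nra).
  apply Rle_div_r; nra.
Qed.

Lemma reduced_root_exists (f : R -> R) (x : R) :
  0 <= x -> loss_rate x < mu1 ->
  (forall C, x <= C -> loss_rate C < mu1 -> continuity_pt f C) -> 0 < f x ->
  (forall C, 0 <= C -> loss_rate C < mu1 -> K2 <= S_of C -> f C < 0) ->
  exists z, x < z /\ loss_rate z < mu1 /\ f z = 0.
Proof.
  intros hx hlx hcont hfx hneg.
  destruct (S_of_unbounded x hx hlx) as [y [hxy [hly hSy]]].
  assert (hl : forall C, C <= y -> loss_rate C < mu1).
  { intros C hC. pose proof (loss_rate_le C y hC). lra. }
  destruct (root_of_sign_change f x y hxy) as [z [hz hfz]].
  - intros C hC. apply hcont; [lra | apply hl; lra].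
  - exact hfx.
  - apply hneg; [lra | exact hly | exact hSy].
  - exists z. split; [lra |]. split; [apply hl; lra | exact hfz].
Qed.

Lemma reduced_dS_continuous (C : R) :
  0 <= C -> loss_rate C < mu1 -> continuity_pt reduced_dS C.
Proof.
  intros hC hl. pose proof (H_of_denom_pos C hC).
  apply continuity_pt_of_ex_derive.
  unfold reduced_dS, dS, H_of, S_of, loss_rate in *.
  auto_derive. repeat split; nra.
Qed.

Lemma reduced_dS_neg (C : R) :
  0 <= C -> loss_rate C < mu1 -> K2 <= S_of C -> reduced_dS C < 0.
Proof.
  intros hC hl hS. apply dS_neg; [apply H_of_nonneg | |]; assumption.
Qed.

Lemma interior_fixed_point_of_reduced_dS_pos (x : R) :
  0 <= x -> 0 <= loss_rate x < mu1 -> 0 < reduced_dS x ->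
  exists H S C, fixed_point H S C /\ in_interior_D b3 d3 eta K1 K2 K3 H S C.
Proof.
  intros hx [hlx0 hlx] hF.
  destruct (reduced_root_exists reduced_dS x hx hlx) as [z [hxz [hlz hz]]].
  - intros C hC hl. apply reduced_dS_continuous; lra.
  - exact hF.
  - exact reduced_dS_neg.
  - apply (interior_fixed_point_of_reduced_root z); [lra | | exact hz].
    pose proof (loss_rate_lt x z hxz). lra.
Qed.

Lemma interior_fixed_point_of_d3_lt_b3 :
  d3 < b3 -> exists H S C, fixed_point H S C /\ in_interior_D b3 d3 eta K1 K2 K3 H S C.
Proof.
  intro hb.
  set (x := (b3 - d3) / b3 * K3).
  assert (hx : 0 < x) by (apply Rmult_lt_0_compat; [apply Rdiv_lt_0_compat |]; lra).
  assert (hlx : loss_rate x = 0) by (unfold x, loss_rate; field; lra).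
  assert (hSx : S_of x = 0) by (unfold S_of; rewrite hlx; unfold Rdiv; ring).
  assert (hFx : reduced_dS x = mu2 * x)
    by (unfold reduced_dS; rewrite dS_eq_balance, hSx; field; lra).
  apply (interior_fixed_point_of_reduced_dS_pos x); [lra | lra |].
  rewrite hFx. apply Rmult_lt_0_compat; lra.
Qed.

Lemma interior_fixed_point_of_b3_lt_d3 :
  - mu1 < b3 - d3 < 0 ->
  b2 - d2 > - (b2 * d1 * (b3 - d3) / (eta * K2 * (b3 - d3 + mu1))) ->
  exists H S C, fixed_point H S C /\ in_interior_D b3 d3 eta K1 K2 K3 H S C.
Proof.
  intros hb hc.
  assert (hl0 : loss_rate 0 = d3 - b3) by (unfold loss_rate; field; lra).
  set (s0 := (d3 - b3) * d1 / (eta * (mu1 + b3 - d3))).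
  assert (hs0 : 0 < s0) by (apply Rdiv_lt_0_compat; nra).
  assert (hH0 : H_of 0 = 0) by (unfold H_of, Rdiv; ring).
  assert (hS0 : S_of 0 = s0)
    by (unfold S_of, s0; rewrite hl0; field; repeat split; nra).
  apply (interior_fixed_point_of_reduced_dS_pos 0); [lra | lra |].
  unfold reduced_dS. rewrite dS_eq_balance, hH0, hS0.
  replace (- (b2 * d1 * (b3 - d3) / (eta * K2 * (b3 - d3 + mu1)))) with (b2 * s0 / K2) in hc
    by (unfold s0; field; repeat split; nra).
  replace ((1 - s0 / K2) * (b2 * s0 + mu2 * 0) - s0 * (d2 + eta * 0))
    with (s0 * (b2 - d2 - b2 * s0 / K2)) by (field; lra).
  apply Rmult_lt_0_compat; lra.
Qed.

(* When b3 = d3 the curve starts at the origin with S_of C = C * S_slope C, so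
   reduced_dS vanishes at 0 and its sign just to the right is that of
   reduced_dS_slope. *)
Definition S_slope (C : R) : R :=
  b3 * (d1 + mu1 * C / K1) / (K3 * eta * (mu1 - loss_rate C)).

Definition reduced_dS_slope (C : R) : R :=
  (1 - S_of C / K2) * (b2 * S_slope C + mu2) - S_slope C * (d2 + eta * H_of C).

Lemma reduced_dS_eq_slope (C : R) :
  b3 = d3 -> loss_rate C < mu1 -> reduced_dS C = C * reduced_dS_slope C.
Proof.
  intros e hl.
  assert (hS : S_of C = C * S_slope C).
  { unfold S_of, S_slope. unfold loss_rate at 1. rewrite e. field. repeat split; lra. }
  unfold reduced_dS, reduced_dS_slope. rewrite dS_eq_balance, hS. ring.
Qed.

Lemma reduced_dS_slope_continuous (C : R) :
  0 <= C -> loss_rate C < mu1 -> continuity_pt reduced_dS_slope C.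
Proof.
  intros hC hl. pose proof (H_of_denom_pos C hC).
  assert (0 < K3 * eta * (mu1 - loss_rate C)) by (repeat apply Rmult_lt_0_compat; lra).
  apply continuity_pt_of_ex_derive.
  unfold reduced_dS_slope, S_slope, H_of, S_of, loss_rate in *.
  auto_derive. repeat split; nra.
Qed.

Lemma reduced_dS_slope_neg (C : R) :
  0 <= C -> loss_rate C < mu1 -> K2 <= S_of C -> reduced_dS_slope C < 0.
Proof.
  intros hC hl hS. pose proof (H_of_denom_pos C hC).
  assert (hslope : 0 < S_slope C).
  { apply Rdiv_lt_0_compat; [| repeat apply Rmult_lt_0_compat]; nra. }
  pose proof (balance_neg (S_slope C) 1 (H_of C) (S_of C)) as hneg.
  rewrite Rmult_1_r in hneg.
  apply hneg; [exact hslope | lra | apply H_of_nonneg | ]; assumption.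
Qed.

Lemma interior_fixed_point_of_b3_eq_d3 :
  b3 = d3 -> b2 - d2 > - (eta * mu1 * mu2 * K3 / (b3 * d1)) ->
  exists H S C, fixed_point H S C /\ in_interior_D b3 d3 eta K1 K2 K3 H S C.
Proof.
  intros e hc.
  assert (hl0 : loss_rate 0 = 0) by (unfold loss_rate; rewrite e; field; lra).
  assert (hG0 : 0 < reduced_dS_slope 0).
  { replace (reduced_dS_slope 0)
      with (b3 * d1 / (K3 * eta * mu1) * (b2 - d2 + eta * mu1 * mu2 * K3 / (b3 * d1)))
      by (unfold reduced_dS_slope, S_slope, S_of, H_of; rewrite hl0; field; lra).
    apply Rmult_lt_0_compat; [| lra].
    apply Rdiv_lt_0_compat; [| repeat apply Rmult_lt_0_compat]; nra. }
  destruct (reduced_root_exists reduced_dS_slope 0) as [z [hz [hlz hGz]]];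
    [lra | lra | | exact hG0 | exact reduced_dS_slope_neg |].
  { intros C hC hl. apply reduced_dS_slope_continuous; lra. }
  apply (interior_fixed_point_of_reduced_root z); [lra | | ].
  - pose proof (loss_rate_lt 0 z hz). lra.
  - rewrite reduced_dS_eq_slope, hGz; [ring | exact e | exact hlz].
Qed.

End LichenFixedPoints.

Theorem theorem2 (b2 b3 d1 d2 d3 mu1 mu2 eta K1 K2 K3 : R)
  (hb2 : 0 < b2) (hb3 : 0 < b3) (hd1 : 0 < d1) (hd2 : 0 < d2) (hd3 : 0 < d3)
  (hmu1 : 0 < mu1) (hmu2 : 0 < mu2) (heta : 0 < eta)
  (hK1 : 0 < K1) (hK2 : 0 < K2) (hK3 : 0 < K3) :
  (* (a) boundary fixed points in the nonnegative orthant *)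
  (forall H S C : R,
     is_fixed_point b2 b3 d1 d2 d3 mu1 mu2 eta K1 K2 K3 H S C ->
     0 <= H -> 0 <= S -> 0 <= C ->
     (H = 0 \/ S = 0 \/ C = 0) ->
     (H = 0 /\ S = 0 /\ C = 0) \/
     (H = 0 /\ S = (b2 - d2) / b2 * K2 /\ C = 0)) /\
  (* (b) bounds on C for interior fixed points *)
  (forall H S C : R,
     is_fixed_point b2 b3 d1 d2 d3 mu1 mu2 eta K1 K2 K3 H S C ->
     in_interior_D b3 d3 eta K1 K2 K3 H S C ->
     (b3 - d3) / b3 * K3 < C /\ C < (b3 - d3 + mu1) / b3 * K3) /\
  (* (c) existence of an interior fixed point *)
  ((b3 > d3 \/
    (b3 = d3 /\ b2 - d2 > - (eta * mu1 * mu2 * K3 / (b3 * d1))) \/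
    (- mu1 < b3 - d3 < 0 /\
     b2 - d2 > - (b2 * d1 * (b3 - d3) / (eta * K2 * (b3 - d3 + mu1))))) ->
   exists H S C : R,
     is_fixed_point b2 b3 d1 d2 d3 mu1 mu2 eta K1 K2 K3 H S C /\
     in_interior_D b3 d3 eta K1 K2 K3 H S C).
Proof.
  split; [| split].
  - intros H S C fp _ _ _ hzero.
    exact (boundary_fixed_point hb2 hd1 hmu1 hmu2 heta hK2 H S C fp hzero).
  - intros H S C fp [[hH _] [[hS _] [hC _]]].
    apply (C_bounds_of_loss_rate hb3 hK3).
    exact (positive_fixed_point_loss_rate hd1 hmu1 heta hK1 hK3 H S C fp hH hS hC).
  - intros [hb | [[e hc] | [hb hc]]].
    + exact (interior_fixed_point_of_d3_lt_b3
               hb2 hb3 hd1 hd2 hmu1 hmu2 heta hK1 hK2 hK3 hb).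
    + exact (interior_fixed_point_of_b3_eq_d3
               hb2 hb3 hd1 hd2 hmu1 hmu2 heta hK1 hK2 hK3 e hc).
    + exact (interior_fixed_point_of_b3_lt_d3
               hb2 hb3 hd1 hd2 hmu1 hmu2 heta hK1 hK2 hK3 hb hc).
Qed.
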